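(* If $G$ is an optimal digraph on $n$ vertices, then $\alpha_G > n/4$.
   Context: Digraphs are finite, loopless, with at most one edge $uv$ per ordered pair. A digraph is $2$-free if no distinct $u,v$ have both $uv,vu$ as edges. A circular interval digraph is a digraph together with a fixed arrangement of its vertices in a circle such that for all distinct $u,v,w$ in clockwise order with $uw\in E(G)$, also $uv,vw\in E(G)$. For distinct $u,v$, $d(u,v) = 1 + |\{w: u,w,v \text{ distinct, in clockwise order}\}|$; this is the length of the ordered pair $uv$. A non-edge is an ordered pair $(u,v)$ of distinct vertices with neither $uv$ nor $vu$ an edge; its length is $d(u,v)$. $\alpha_G$ is the minimum length of a non-edge ($\infty$ if none) and $\beta_G$ the maximum length of an edge ($0$ if none). $\xi(G)$ is the number of pairs $(uv,(w,x))$ with $uv\in E(G)$, $(w,x)$ a non-edge, $d(u,v)>d(w,x)$. $\tilde P_3(G)$ is the number of triples $(a,b,c)$ of distinct vertices with $ab,bc\in E(G)$ and $ac,ca\notin E(G)$. For fixed $n\ge 4$, $G$ is optimal if it is a $2$-free circular interval digraph on $n$ vertices maximizing $\tilde P_3$ among all such digraphs and, subject to this, minimizing $\xi(G)$. *)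

From mathcomp Require Import all_boot.
Set Implicit Arguments. Unset Strict Implicit. Unset Printing Implicit Defensive.

(* Vertices are 'I_n, arranged on the circle in increasing (cyclic) order:
   clockwise successor of i is i+1 mod n. *)

(* d(u,v) = 1 + #{w strictly between u and v clockwise} = (v - u) mod n. *)
Definition cdist (n : nat) (u v : 'I_n) : nat := (v + n - u) %% n.

Definition clockwise (n : nat) (u v w : 'I_n) : bool :=
  [&& u != v, v != w, u != w & cdist u v < cdist u w].

(* finite loopless digraph with at most one edge per ordered pair: a relation *)
Definition loopless (n : nat) (E : rel 'I_n) : Prop := forall u, ~~ E u u.

Definition two_free (n : nat) (E : rel 'I_n) : Prop :=
  forall u v, u != v -> ~~ (E u v && E v u).

Definition circ_interval (n : nat) (E : rel 'I_n) : Prop :=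
  forall u v w, clockwise u v w -> E u w -> E u v && E v w.

Definition valid (n : nat) (E : rel 'I_n) : Prop :=
  [/\ loopless E, two_free E & circ_interval E].

Definition nonedge (n : nat) (E : rel 'I_n) (u v : 'I_n) : bool :=
  [&& u != v, ~~ E u v & ~~ E v u].

(* alpha_G : minimum length of a non-edge; None encodes infinity *)
Definition alpha (n : nat) (E : rel 'I_n) : option nat :=
  if [exists p : 'I_n * 'I_n, nonedge E p.1 p.2]
  then Some (\big[minn/n]_(p : 'I_n * 'I_n | nonedge E p.1 p.2) cdist p.1 p.2)
  else None.

Definition xi (n : nat) (E : rel 'I_n) : nat :=
  #|[set p : ('I_n * 'I_n) * ('I_n * 'I_n) |
      [&& E p.1.1 p.1.2, nonedge E p.2.1 p.2.2 &
          cdist p.2.1 p.2.2 < cdist p.1.1 p.1.2]]|.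

Definition P3 (n : nat) (E : rel 'I_n) : nat :=
  #|[set t : 'I_n * 'I_n * 'I_n |
      [&& t.1.1 != t.1.2, t.1.2 != t.2, t.1.1 != t.2,
          E t.1.1 t.1.2, E t.1.2 t.2, ~~ E t.1.1 t.2 & ~~ E t.2 t.1.1]]|.

Definition optimal (n : nat) (E : rel 'I_n) : Prop :=
  [/\ valid E,
      (forall E' : rel 'I_n, valid E' -> P3 E' <= P3 E) &
      (forall E' : rel 'I_n, valid E' -> P3 E' = P3 E -> xi E <= xi E')].

From mathcomp Require Import all_boot zify.
Set Implicit Arguments. Unset Strict Implicit. Unset Printing Implicit Defensive.

(* Let E be optimal and let uw be a shortest non-edge, of length a, and
   suppose 4a <= n. The argument compares E with three modified digraphs.
   - Deleting a longest edge pq gains the 2-paths p -> v -> q for the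
     (cdist p q).-1 vertices v between p and q, and loses at most one 2-path
     per vertex between q and p. By optimality no edge can therefore span
     half of the circle or more (optimal_edges_short).
   - Adding uw keeps the digraph valid; with all edges short, a count of
     the neighbourhoods of u and w shows that P3 does not decrease, and
     strictly increases if a > 1 (add_P3). Hence a = 1 and P3 is unchanged.
   - Adding an edge of length 1 strictly decreases xi as soon as some edge
     is longer (add_unit_xi); so all edges of E have length 1, and then the
     directed cycle has strictly more induced 2-paths (cycle_P3_gt),
     contradicting the maximality of P3 E. *)

(* Closed forms of the clockwise distance and of the clockwise order, which
   reduce circle geometry to linear arithmetic on the vertex labels. *)
Lemma cdistE n (u v : 'I_n) : cdist u v = if u <= v then v - u else v + n - u.
Proof.
rewrite /cdist; case: leqP => h.
- have -> : v + n - u = (v - u) + n by lia.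
  rewrite modnDr modn_small //; have := ltn_ord v; lia.
- rewrite modn_small //; have := ltn_ord u; lia.
Qed.

Lemma clockwiseE n (x y z : 'I_n) : clockwise x y z =
  [|| (x < y) && (y < z), (y < z) && (z < x) | (z < x) && (x < y)].
Proof.
rewrite /clockwise !cdistE -!(inj_eq val_inj) /=.
have := ltn_ord x; have := ltn_ord y; have := ltn_ord z.
case: (leqP x y); case: (leqP x z) => *; apply/idP/idP; lia.
Qed.

Ltac circle_arith :=
  rewrite ?clockwiseE ?cdistE -?(inj_eq val_inj) /=; repeat (case: ifP => ?); lia.

Section Circle.
Variable n : nat.
Implicit Types x y z v : 'I_n.

Lemma cdist_lt x y : cdist x y < n.
Proof. move: (ltn_ord x) (ltn_ord y); circle_arith. Qed.

Lemma cdist_pos x y : x != y -> 0 < cdist x y.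
Proof. move: (ltn_ord x) (ltn_ord y); circle_arith. Qed.

Lemma cdist_sym x y : x != y -> cdist x y + cdist y x = n.
Proof. move: (ltn_ord x) (ltn_ord y); circle_arith. Qed.

Lemma cdist_injl z : injective (cdist z).
Proof.
move=> x y e; apply/val_inj; move: e (ltn_ord x) (ltn_ord y) (ltn_ord z); circle_arith.
Qed.

Lemma cdist_injr z : injective (fun x : 'I_n => cdist x z).
Proof.
move=> x y e; apply/val_inj; move: e (ltn_ord x) (ltn_ord y) (ltn_ord z); circle_arith.
Qed.

Lemma clockwise_rot x y z : clockwise x y z -> clockwise y z x.
Proof. circle_arith. Qed.

Lemma clockwise_cases x y z : x != y -> y != z -> x != z ->
  clockwise x y z || clockwise x z y.
Proof. circle_arith. Qed.

Lemma clockwise_lt x y z : clockwise x y z -> cdist x y < cdist x z.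
Proof. by case/and4P. Qed.

Lemma clockwise_lt_r x y z : clockwise x y z -> cdist y z < cdist x z.
Proof. move: (ltn_ord x) (ltn_ord y) (ltn_ord z); circle_arith. Qed.

End Circle.

Lemma sum_ord_range n m1 m2 :
  \sum_(k < n) ((m1 <= k) && (k < m2)) = minn m2 n - minn m1 n.
Proof.
elim: n => [|n IH]; first by rewrite big_ord0; lia.
rewrite big_ord_recr /= IH; case: (leqP m1 n); case: (ltnP n m2) => /=; lia.
Qed.

Lemma card_ord_range n m : m <= n -> #|[set k : 'I_n | 0 < k < m]| = m.-1.
Proof.
move=> hm; rewrite -sum1dep_card big_mkcond /=.
rewrite (eq_bigr (fun k : 'I_n => nat_of_bool ((1 <= k) && (k < m)))).
  by rewrite sum_ord_range; lia.
by move=> k _; case: ifP.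
Qed.

Lemma card_dist_after n (z : 'I_n) m : m <= n ->
  #|[set v | 0 < cdist z v < m]| = m.-1.
Proof.
move=> hm; pose h v := Ordinal (cdist_lt z v).
have hinj : injective h by move=> x y /(congr1 val) /cdist_injl.
rewrite -(card_ord_range hm) -[RHS](card_preimset _ hinj).
by apply: eq_card => v; rewrite !inE.
Qed.

Lemma card_dist_before n (z : 'I_n) m : m <= n ->
  #|[set v | 0 < cdist v z < m]| = m.-1.
Proof.
move=> hm; pose h v := Ordinal (cdist_lt v z).
have hinj : injective h by move=> x y /(congr1 val) /cdist_injr.
rewrite -(card_ord_range hm) -[RHS](card_preimset _ hinj).
by apply: eq_card => v; rewrite !inE.
Qed.

Definition arc n (x z : 'I_n) : {set 'I_n} := [set y | clockwise x y z].

Lemma card_arc n (x z : 'I_n) : x != z -> #|arc x z| = (cdist x z).-1.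
Proof.
move=> hxz; rewrite -(card_dist_after x (ltnW (cdist_lt x z))).
apply: eq_card => v; rewrite !inE /clockwise.
move: hxz (ltn_ord x) (ltn_ord z) (ltn_ord v); circle_arith.
Qed.

Lemma bigmin_le (I : eqType) (s : seq I) (P : pred I) (F : I -> nat) d i :
  i \in s -> P i -> \big[minn/d]_(j <- s | P j) F j <= F i.
Proof.
elim: s => // x s IH; rewrite inE big_cons => /orP [/eqP -> -> | hi hP].
  exact: geq_minl.
case: ifP => _; last exact: IH.
exact: leq_trans (geq_minr _ _) (IH hi hP).
Qed.

Lemma bigmin_attained (I : eqType) (s : seq I) (P : pred I) (F : I -> nat) d :
  let m := \big[minn/d]_(j <- s | P j) F j in
  m = d \/ exists2 i, (i \in s) && P i & m = F i.
Proof.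
rewrite /= big_seq_cond; elim/big_ind: _ => [|x y hx hy|i hi]; [by left| |by right; exists i].
by rewrite /minn; case: ifP.
Qed.

Lemma alphaP n (E : rel 'I_n) a : alpha E = Some a ->
  (exists u w, nonedge E u w /\ cdist u w = a) /\
  (forall u w, nonedge E u w -> a <= cdist u w).
Proof.
rewrite /alpha; case: ifP => // /existsP [p0 hp0] [<-].
pose P (p : 'I_n * 'I_n) := nonedge E p.1 p.2.
have hle p : P p -> \big[minn/n]_(q | P q) cdist q.1 q.2 <= cdist p.1 p.2.
  exact: bigmin_le (mem_index_enum p).
split; last by move=> u w h; exact: (hle (u, w)).
case: (bigmin_attained (index_enum _) P (fun q => cdist q.1 q.2) n) => [hd | [p /andP [_ hp] ->]].
  by exfalso; move: (hle p0 hp0) (cdist_lt p0.1 p0.2); rewrite hd ltnNge => ->.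
by exists p.1, p.2.
Qed.

Section ValidDigraph.
Variables (n : nat) (E : rel 'I_n).
Hypothesis hv : valid E.

Lemma valid_irrefl x : ~~ E x x.
Proof. by case: hv. Qed.

Lemma edge_neq x y : E x y -> x != y.
Proof. by move=> hxy; apply/eqP => exy; move: hxy; rewrite exy (negbTE (valid_irrefl y)). Qed.

Lemma valid_asym x y : E x y -> ~~ E y x.
Proof.
case: hv => _ h2 _ hxy; apply/negP => hyx.
by move: (h2 x y (edge_neq hxy)); rewrite hxy hyx.
Qed.

Lemma valid_interval x y z : clockwise x y z -> E x z -> E x y && E y z.
Proof. by case: hv => _ _; apply. Qed.

(* For an edge pq, out-neighbours of q and in-neighbours of p lie strictly
   inside the arc from q back to p: otherwise the interval property would
   force the reverse edge qp. *)
Lemma out_nbr_in_arc p q v : E p q -> E q v -> clockwise q v p.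
Proof.
move=> hpq hqv; have hqp := valid_asym hpq.
have hvp : v != p by apply: contraNneq hqp => <-.
have hqp' : q != p by rewrite eq_sym edge_neq.
case/orP: (clockwise_cases (edge_neq hqv) hvp hqp') => // hc.
by case/andP: (valid_interval hc hqv) => h _; rewrite h in hqp.
Qed.

Lemma in_nbr_in_arc p q v : E p q -> E v p -> clockwise q v p.
Proof.
move=> hpq hvp; have hqp := valid_asym hpq.
have hqv : q != v by apply: contraNneq hqp => ->.
have hqp' : q != p by rewrite eq_sym edge_neq.
case/orP: (clockwise_cases hqv (edge_neq hvp) hqp') => // hc.
by case/andP: (valid_interval (clockwise_rot (clockwise_rot hc)) hvp) => _ h; rewrite h in hqp.
Qed.

Lemma two_path_cover x y z v : E x y -> E y z -> clockwise x v z -> E x v || E v z.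
Proof.
move=> hxy hyz hc; case: (eqVneq v y) => [-> | hvy]; first by rewrite hxy.
have /and4P [hxv _ _ _] := hc.
case/orP: (clockwise_cases hxv hvy (edge_neq hxy)) => hc2.
- by case/andP: (valid_interval hc2 hxy) => ->.
- have hc3 : clockwise y v z.
    by move: hc hc2 (ltn_ord x) (ltn_ord y) (ltn_ord z) (ltn_ord v); circle_arith.
  by case/andP: (valid_interval hc3 hyz) => _ ->; rewrite orbT.
Qed.

End ValidDigraph.

Lemma card_sub_setU (T : finType) (A B C : {set T}) :
  C \subset A :|: B -> #|C| <= #|A| + #|B|.
Proof. by move=> /subset_leq_card /leq_trans; apply; apply: leq_card_setU. Qed.

Lemma card_disjoint_sub (T : finType) (A B C : {set T}) :
  [disjoint A & B] -> A \subset C -> B \subset C -> #|A| + #|B| <= #|C|.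
Proof.
move=> hAB hA hB; have /eqP <- : #|A :|: B| == #|A| + #|B|.
  by rewrite (leq_card_setU A B).2.
by apply: subset_leq_card; rewrite subUset hA.
Qed.

Definition paths3 n (E : rel 'I_n) : {set 'I_n * 'I_n * 'I_n} :=
  [set t | [&& t.1.1 != t.1.2, t.1.2 != t.2, t.1.1 != t.2,
              E t.1.1 t.1.2, E t.1.2 t.2, ~~ E t.1.1 t.2 & ~~ E t.2 t.1.1]].

Definition inversions n (E : rel 'I_n) : {set ('I_n * 'I_n) * ('I_n * 'I_n)} :=
  [set p | [&& E p.1.1 p.1.2, nonedge E p.2.1 p.2.2 &
              cdist p.2.1 p.2.2 < cdist p.1.1 p.1.2]].

Lemma paths3_intro n (E : rel 'I_n) x y z : x != y -> y != z -> x != z ->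
  E x y -> E y z -> ~~ E x z -> ~~ E z x -> (x, y, z) \in paths3 E.
Proof. by move=> *; rewrite inE /=; apply/and3P; split=> //; apply/and5P. Qed.

Lemma paths3_elim n (E : rel 'I_n) x y z : (x, y, z) \in paths3 E ->
  [/\ x != y, y != z, x != z, E x y & E y z] /\ ~~ E x z /\ ~~ E z x.
Proof. by rewrite inE /= => /and3P [? ? /and5P []]. Qed.

Lemma P3_balance n (E E' : rel 'I_n) :
  P3 E + #|paths3 E' :\: paths3 E| = P3 E' + #|paths3 E :\: paths3 E'|.
Proof.
change (#|paths3 E| + #|paths3 E' :\: paths3 E| = #|paths3 E'| + #|paths3 E :\: paths3 E'|).
have := cardsID (paths3 E) (paths3 E'); have := cardsID (paths3 E') (paths3 E).
by rewrite setIC; lia.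
Qed.

Definition out_nbrs n (E : rel 'I_n) x : {set 'I_n} := [set y | E x y].
Definition in_nbrs n (E : rel 'I_n) x : {set 'I_n} := [set y | E y x].

Definition del_edge n (E : rel 'I_n) p q : rel 'I_n :=
  fun x y => E x y && ~~ ((x == p) && (y == q)).
Definition add_edge n (E : rel 'I_n) u w : rel 'I_n :=
  fun x y => E x y || ((x == u) && (y == w)).

(* Deleting a longest edge pq keeps the digraph valid, loses at most the
   2-paths through pq (one per vertex of the arc from q to p) and gains the
   2-paths p -> v -> q for v on the arc from p to q. *)
Section DeleteLongestEdge.
Variables (n : nat) (E : rel 'I_n) (p q : 'I_n).
Hypotheses (hv : valid E) (hpq : E p q)
  (hlongest : forall x y, E x y -> cdist x y <= cdist p q).

Let E' := del_edge E p q.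

Lemma del_valid : valid E'.
Proof.
split.
- by move=> x; rewrite /E' /del_edge (negbTE (valid_irrefl hv x)).
- move=> x y _; apply/negP => /andP [/andP [hxy _] /andP [hyx _]].
  by move: (valid_asym hv hxy); rewrite hyx.
- move=> x v y hc /andP [hxy _]; have /andP [hxv hvy] := valid_interval hv hc hxy.
  have hshort := hlongest hxy; rewrite /E' /del_edge hxv hvy /=.
  apply/andP; split; apply/negP => /andP [/eqP ? /eqP ?]; subst.
  + by have := clockwise_lt hc; lia.
  + by have := clockwise_lt_r hc; lia.
Qed.

Lemma del_gain : (cdist p q).-1 <= #|paths3 E' :\: paths3 E|.
Proof.
have hpq' := edge_neq hv hpq.
have hinj : injective (fun v : 'I_n => (p, v, q)) by move=> ? ? [].
rewrite -(card_arc hpq') -(card_imset (arc p q) hinj).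
apply/subset_leq_card/subsetP => _ /imsetP [v hc ->]; rewrite inE in hc.
have /andP [hpv hvq] := valid_interval hv hc hpq.
have /and4P [hpv' hvq' _ _] := hc.
rewrite inE; apply/andP; split.
- by apply/negP => /paths3_elim [_ []]; rewrite hpq.
- apply: paths3_intro => //; rewrite /E' /del_edge ?hpv ?hvq ?eqxx ?andbF //=.
  + by rewrite andbT eq_sym.
  + by rewrite (negbTE (valid_asym hv hpq)).
Qed.
Lemma del_loss : #|paths3 E :\: paths3 E'| <= (cdist q p).-1.
Proof.
have hqp := valid_asym hv hpq.
pose A := out_nbrs E q :\: in_nbrs E p; pose B := in_nbrs E p :\: out_nbrs E q.
have hsub : paths3 E :\: paths3 E' \subset
    [set (p, q, c) | c in A] :|: [set (x, p, q) | x in B].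
  apply/subsetP => [[[x y] z]]; rewrite inE => /andP [hlost hin].
  have [[hxy hyz hxz exy eyz] [nxz nzx]] := paths3_elim hin.
  case: (boolP ((x == p) && (y == q))) => [/andP [/eqP ? /eqP ?] | hxy_pq].
    by subst; apply/setUP; left; apply/imsetP; exists z; rewrite // !inE eyz nzx.
  case: (boolP ((y == p) && (z == q))) => [/andP [/eqP ? /eqP ?] | hyz_pq].
    by subst; apply/setUP; right; apply/imsetP; exists x; rewrite // !inE exy nzx.
  case/negP: hlost; apply: paths3_intro => //; rewrite /E' /del_edge.
  - by rewrite exy.
  - by rewrite eyz.
  - by rewrite (negbTE nxz).
  - by rewrite (negbTE nzx).
have hAB : #|A| + #|B| <= #|arc q p|.
  apply: card_disjoint_sub.
  - by rewrite disjoint_subset; apply/subsetP => v; rewrite !inE => /andP [_ ->].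
  - by apply/subsetP => v; rewrite !inE => /andP [_ /(out_nbr_in_arc hv hpq)].
  - by apply/subsetP => v; rewrite !inE => /andP [_ /(in_nbr_in_arc hv hpq)].
rewrite -card_arc; last by rewrite eq_sym (edge_neq hv hpq).
apply: leq_trans (card_sub_setU hsub) _; apply: leq_trans hAB.
exact: leq_add (leq_imset_card _ _) (leq_imset_card _ _).
Qed.

(* Since the arc from p to q has (cdist p q).-1 inner vertices and the arc
   from q to p has (cdist q p).-1 = n - cdist p q - 1, deletion does not
   decrease P3 once pq spans half of the circle. *)
Lemma del_P3 : P3 E + 2 * cdist p q <= P3 E' + n.
Proof.
have hpq' := edge_neq hv hpq; have hqp' : q != p by rewrite eq_sym.
have := P3_balance E E'; have := del_gain; have := del_loss.
have := cdist_sym hpq'; have := cdist_pos hpq'; have := cdist_pos hqp'; lia.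
Qed.

(* If pq spans exactly half of the circle, deletion destroys the inversion
   between pq and a shorter non-edge uw and creates no new one: the new
   non-edges pq and qp both have length cdist p q, which no edge exceeds. *)
Lemma del_xi u w : nonedge E u w -> cdist u w < cdist p q ->
  n = 2 * cdist p q -> xi E' < xi E.
Proof.
move=> huw hlt hhalf; have hpq' := edge_neq hv hpq.
apply: (@proper_card _ (inversions E') (inversions E)); apply/properP; split.
- apply/subsetP => -[[x y] [s t]]; rewrite !inE /= /E' /del_edge /nonedge.
  move=> /and3P [/andP [hxy _] /and3P [hst hts hts'] hlen].
  rewrite hxy hst hlen /= andbT; have hle := hlongest hxy.
  apply/andP; split; apply/negP => hE.
  + by move: hts; rewrite hE /= negbK => /andP [/eqP ? /eqP ?]; subst; lia.
  + move: hts'; rewrite hE /= negbK => /andP [/eqP ? /eqP ?]; subst.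
    by have := cdist_sym hpq'; lia.
- exists ((p, q), (u, w)); first by rewrite inE /= hpq huw hlt.
  by rewrite inE /= /E' /del_edge !eqxx andbF.
Qed.

End DeleteLongestEdge.

(* In an optimal digraph with a non-edge shorter than half the circle, every
   edge is shorter than half the circle: otherwise deleting a longest edge
   would not decrease P3 but would decrease xi. *)
Lemma optimal_edges_short n (E : rel 'I_n) u w :
  optimal E -> nonedge E u w -> 2 * cdist u w < n ->
  forall x y, E x y -> 2 * cdist x y < n.
Proof.
move=> [hv hP3max hximin] huw hshort x y hxy; rewrite ltnNge; apply/negP => hlong.
have [[p q] /= hpq hmax] := @arg_maxnP _ (x, y) (fun e : 'I_n * 'I_n => E e.1 e.2)
  (fun e => cdist e.1 e.2) hxy.
have hlongest a b : E a b -> cdist a b <= cdist p q by exact: (hmax (a, b)).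
have hv' := del_valid hv hpq hlongest.
have := hP3max _ hv'; have := del_P3 hv hpq; have := hlongest _ _ hxy.
move=> hxy_pq hgain hle; have hhalf : n = 2 * cdist p q by lia.
have hP3eq : P3 (del_edge E p q) = P3 E by lia.
have huw_pq : cdist u w < cdist p q by lia.
by have := hximin _ hv' hP3eq; have := del_xi hv hpq hlongest huw huw_pq hhalf; lia.
Qed.

Lemma short_degrees n (E : rel 'I_n) x : valid E ->
  (forall y z, E y z -> 2 * cdist y z < n) ->
  2 * #|out_nbrs E x| < n /\ 2 * #|in_nbrs E x| < n.
Proof.
move=> hv hshort; have hx := ltn_ord x; have hm : n.+1 %/ 2 <= n by lia.
split.
- have : out_nbrs E x \subset [set v | 0 < cdist x v < n.+1 %/ 2].
    apply/subsetP => v; rewrite !inE => hxv.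
    by rewrite cdist_pos ?(edge_neq hv hxv) //=; have := hshort _ _ hxv; lia.
  by move/subset_leq_card; rewrite card_dist_after //; lia.
- have : in_nbrs E x \subset [set v | 0 < cdist v x < n.+1 %/ 2].
    apply/subsetP => v; rewrite !inE => hvx.
    by rewrite cdist_pos ?(edge_neq hv hvx) //=; have := hshort _ _ hvx; lia.
  by move/subset_leq_card; rewrite card_dist_before //; lia.
Qed.

(* With a = cdist u w,
   ou = #|out u|, f = #|out w|, g = #|in u|, k = #|out w & in u| and
   U = #|out w | in u|, at least G >= (f - k) + (g - k) 2-paths are gained
   and at most L <= ou + k are lost; the gain wins when 4a <= n, strictly
   if a > 1, so P3 passes from P to P' >= P. *)
Lemma add_count_arith n a ou f g k U G L P P' :
  4 * a <= n -> 0 < a -> ou <= a.-1 -> a.-1 <= f -> a.-1 <= g ->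
  2 * f < n -> 2 * g < n -> k <= f -> k <= g ->
  (0 < k -> (n - a).-1 <= U) -> U + k = f + g ->
  (f - k) + (g - k) <= G -> L <= ou + k -> P + G = P' + L ->
  P <= P' /\ (1 < a -> P < P').
Proof. by case: (posnP k) => hk; lia. Qed.

Section ShortestNonEdge.
Variables (n : nat) (E : rel 'I_n) (u w : 'I_n).
Hypotheses (hv : valid E) (huw : nonedge E u w)
  (hshortest : forall x y, nonedge E x y -> cdist u w <= cdist x y).

Let huw' : u != w. Proof. by case/and3P: huw. Qed.
Let nEuw : ~~ E u w. Proof. by case/and3P: huw. Qed.
Let nEwu : ~~ E w u. Proof. by case/and3P: huw. Qed.

Lemma short_pair_adjacent x y : x != y -> cdist x y < cdist u w -> E x y || E y x.
Proof.
move=> hxy hlt; apply/negPn/negP; rewrite negb_or => /andP [hn1 hn2].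
have : nonedge E x y by rewrite /nonedge hxy hn1 hn2.
by move/hshortest; lia.
Qed.

(* Out-neighbours of u come before w; otherwise uw would be an edge. *)
Lemma out_u_before_w v : E u v -> cdist u v < cdist u w.
Proof.
move=> huv; rewrite ltnNge; apply/negP => hge.
have hvw : v != w by apply: contraNneq nEuw => <-.
have hc : clockwise u w v.
  by move: hge (edge_neq hv huv) hvw huw' (ltn_ord u) (ltn_ord v) (ltn_ord w); circle_arith.
by case/andP: (valid_interval hv hc huv); rewrite (negbTE nEuw).
Qed.

Lemma arc_u_w_full v : clockwise u v w -> E u v && E v w.
Proof.
move=> hc; have /and4P [huv hvw _ _] := hc.
apply/andP; split.
- case/orP: (short_pair_adjacent huv (clockwise_lt hc)) => // hvu.
  by case/andP: (valid_interval hv (clockwise_rot hc) hvu); rewrite (negbTE nEwu).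
- case/orP: (short_pair_adjacent hvw (clockwise_lt_r hc)) => // hwv.
  case/andP: (valid_interval hv (clockwise_rot (clockwise_rot hc)) hwv).
  by rewrite (negbTE nEwu).
Qed.

Lemma out_w_near v : 2 * cdist u w <= n -> 0 < cdist w v < cdist u w -> E w v.
Proof.
move=> hhalf /andP [hpos hlt].
have hwv : w != v by apply: contraTneq hpos => ->; move: (ltn_ord v); circle_arith.
case/orP: (short_pair_adjacent hwv hlt) => // hvw.
have hc : clockwise v u w.
  by move: hpos hlt hhalf huw' (ltn_ord u) (ltn_ord v) (ltn_ord w); circle_arith.
by case/andP: (valid_interval hv hc hvw); rewrite (negbTE nEuw).
Qed.

Lemma in_u_near v : 2 * cdist u w <= n -> 0 < cdist v u < cdist u w -> E v u.
Proof.
move=> hhalf /andP [hpos hlt].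
have hvu : v != u by apply: contraTneq hpos => ->; move: (ltn_ord u); circle_arith.
case/orP: (short_pair_adjacent hvu hlt) => // huv.
have hc : clockwise u w v.
  by move: hpos hlt hhalf huw' (ltn_ord u) (ltn_ord v) (ltn_ord w); circle_arith.
by case/andP: (valid_interval hv hc huv); rewrite (negbTE nEuw).
Qed.

Lemma in_u_not_in_w x : E x u -> ~~ E x w.
Proof.
move=> hxu; apply/negP => hxw.
case/orP: (clockwise_cases (edge_neq hv hxu) huw' (edge_neq hv hxw)) => hc.
- by case/andP: (valid_interval hv hc hxw); rewrite (negbTE nEuw).
- by case/andP: (valid_interval hv hc hxu); rewrite (negbTE nEwu).
Qed.

Lemma out_w_not_out_u c : E w c -> ~~ E u c.
Proof.
move=> hwc; apply/negP => huc.
have hcw : c != w by apply: contraNneq nEuw => <-.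
have hc : clockwise u c w by rewrite /clockwise (edge_neq hv huc) hcw huw' out_u_before_w.
by case/andP: (valid_interval hv (clockwise_rot (clockwise_rot hc)) hwc); rewrite (negbTE nEwu).
Qed.

(* Adding the shortest non-edge uw keeps the digraph valid; it destroys only
   2-paths u -> y -> w and w -> y -> u, and creates the 2-paths u -> w -> c
   and x -> u -> w. *)
Let E' := add_edge E u w.

Lemma add_valid : valid E'.
Proof.
split.
- move=> x; rewrite /E' /add_edge (negbTE (valid_irrefl hv x)) /=.
  by apply: contra huw' => /andP [/eqP <- /eqP ->].
- move=> x y _; rewrite /E' /add_edge; apply/negP => /andP [].
  case/orP => [hxy | /andP [/eqP -> /eqP ->]]; case/orP => [hyx | /andP [/eqP ? /eqP ?]].
  + by move: (valid_asym hv hxy); rewrite hyx.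
  + by subst; move: nEwu; rewrite hxy.
  + by move: nEwu; rewrite hyx.
  + by subst; move: huw'; rewrite eqxx.
- move=> x v y hc; rewrite /E' /add_edge => /orP [hxy | /andP [/eqP ? /eqP ?]].
  + by case/andP: (valid_interval hv hc hxy) => -> ->.
  + by subst; case/andP: (arc_u_w_full hc) => -> ->.
Qed.

Lemma add_loss :
  #|paths3 E :\: paths3 E'| <= #|out_nbrs E u| + #|out_nbrs E w :&: in_nbrs E u|.
Proof.
have hsub : paths3 E :\: paths3 E' \subset
    [set (u, y, w) | y in out_nbrs E u] :|:
    [set (w, y, u) | y in out_nbrs E w :&: in_nbrs E u].
  apply/subsetP => [[[x y] z]]; rewrite inE => /andP [hlost hin].
  have [[hxy hyz hxz exy eyz] [nxz nzx]] := paths3_elim hin.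
  case: (boolP ((x == u) && (z == w))) => [/andP [/eqP ? /eqP ?] | hxz_uw].
    by subst; apply/setUP; left; apply/imsetP; exists y; rewrite // inE.
  case: (boolP ((z == u) && (x == w))) => [/andP [/eqP ? /eqP ?] | hzx_uw].
    by subst; apply/setUP; right; apply/imsetP; exists y; rewrite // !inE exy eyz.
  case/negP: hlost; apply: paths3_intro => //; rewrite /E' /add_edge.
  - by rewrite exy.
  - by rewrite eyz.
  - by rewrite negb_or nxz.
  - by rewrite negb_or nzx.
apply: leq_trans (card_sub_setU hsub) _.
exact: leq_add (leq_imset_card _ _) (leq_imset_card _ _).
Qed.

Lemma add_gain : #|out_nbrs E w :\: in_nbrs E u| + #|in_nbrs E u :\: out_nbrs E w|
  <= #|paths3 E' :\: paths3 E|.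
Proof.
have inj1 : injective (fun c : 'I_n => (u, w, c)) by move=> ? ? [].
have inj2 : injective (fun x : 'I_n => (x, u, w)) by move=> ? ? [].
have hE'uw : E' u w by rewrite /E' /add_edge !eqxx orbT.
rewrite -(card_imset _ inj1) -(card_imset _ inj2); apply: card_disjoint_sub.
- rewrite disjoint_subset; apply/subsetP => _ /imsetP [c _ ->]; rewrite !inE.
  by apply/imsetP => -[x _ [_ e _]]; move: huw'; rewrite e eqxx.
- apply/subsetP => _ /imsetP [c hc ->]; rewrite !inE in hc; case/andP: hc => hcu hwc.
  have hwc' := edge_neq hv hwc.
  have huc : u != c by apply: contraNneq nEwu => ->.
  rewrite in_setD; apply/andP; split.
  + by apply/negP => /paths3_elim [[_ _ _ h _] _]; move: nEuw; rewrite h.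
  + apply: paths3_intro => //; rewrite /E' /add_edge ?hwc //.
    * by rewrite negb_or (out_w_not_out_u hwc) /= negb_and eq_sym hwc' orbT.
    * by rewrite negb_or hcu negb_and (negbTE huw') orbT.
- apply/subsetP => _ /imsetP [x hx ->]; rewrite !inE in hx; case/andP: hx => hwx hxu.
  have hxu' := edge_neq hv hxu.
  have hxw : x != w by apply: contraNneq nEwu => <-.
  rewrite in_setD; apply/andP; split.
  + by apply/negP => /paths3_elim [[_ _ _ _ h] _]; move: nEuw; rewrite h.
  + apply: paths3_intro => //; rewrite /E' /add_edge ?hxu //.
    * by rewrite negb_or (in_u_not_in_w hxu) negb_and hxu'.
    * by rewrite negb_or hwx negb_and eq_sym (negbTE huw').
Qed.

Lemma out_u_small : #|out_nbrs E u| <= (cdist u w).-1.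
Proof.
rewrite -(card_dist_after u (ltnW (cdist_lt u w))); apply/subset_leq_card/subsetP => v.
rewrite !inE => huv; rewrite (out_u_before_w huv) andbT.
exact: cdist_pos (edge_neq hv huv).
Qed.

Lemma out_w_large : 2 * cdist u w <= n -> (cdist u w).-1 <= #|out_nbrs E w|.
Proof.
move=> hhalf; rewrite -(card_dist_after w (ltnW (cdist_lt u w))).
by apply/subset_leq_card/subsetP => v; rewrite !inE; apply: out_w_near.
Qed.

Lemma in_u_large : 2 * cdist u w <= n -> (cdist u w).-1 <= #|in_nbrs E u|.
Proof.
move=> hhalf; rewrite -(card_dist_before u (ltnW (cdist_lt u w))).
by apply/subset_leq_card/subsetP => v; rewrite !inE; apply: in_u_near.
Qed.

(* A common neighbour w -> b -> u forces out w and in u to cover the arc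
   from w to u. *)
Lemma common_nbr_union : 0 < #|out_nbrs E w :&: in_nbrs E u| ->
  (cdist w u).-1 <= #|out_nbrs E w :|: in_nbrs E u|.
Proof.
case/card_gt0P => b; rewrite !inE => /andP [hwb hbu].
rewrite -card_arc 1?eq_sym //; apply/subset_leq_card/subsetP => v.
by rewrite !inE; exact: (two_path_cover hv hwb hbu).
Qed.

Lemma add_P3 : 4 * cdist u w <= n -> (forall x y, E x y -> 2 * cdist x y < n) ->
  P3 E <= P3 E' /\ (1 < cdist u w -> P3 E < P3 E').
Proof.
move=> hquarter hshort; have hhalf : 2 * cdist u w <= n by lia.
have [hf _] := short_degrees w hv hshort; have [_ hg] := short_degrees u hv hshort.
have hkf : #|out_nbrs E w :&: in_nbrs E u| <= #|out_nbrs E w| by apply/subset_leq_card/subsetIl.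
have hkg : #|out_nbrs E w :&: in_nbrs E u| <= #|in_nbrs E u| by apply/subset_leq_card/subsetIr.
have hU : 0 < #|out_nbrs E w :&: in_nbrs E u| ->
    (n - cdist u w).-1 <= #|out_nbrs E w :|: in_nbrs E u|.
  by move=> /common_nbr_union; have := cdist_sym huw'; lia.
apply: (add_count_arith hquarter (cdist_pos huw') out_u_small (out_w_large hhalf)
  (in_u_large hhalf) hf hg hkf hkg hU (cardsUI _ _) _ add_loss (P3_balance E E')).
by rewrite -!cardsD setIC -cardsD; exact: add_gain.
Qed.
End ShortestNonEdge.

(* Adding a non-edge uw of length 1 removes its inversions with all longer
   edges and creates none (no non-edge is shorter than 1). *)
Lemma add_unit_xi n (E : rel 'I_n) u w p q : nonedge E u w -> cdist u w = 1 ->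
  E p q -> 1 < cdist p q -> xi (add_edge E u w) < xi E.
Proof.
move=> huw h1 hpq hlong.
apply: (@proper_card _ (inversions (add_edge E u w)) (inversions E)); apply/properP; split.
- apply/subsetP => -[[x y] [s t]]; rewrite !inE /= /add_edge /nonedge.
  move=> /and3P [hxy /and3P [hst hn1 hn2] hlen].
  rewrite negb_or in hn1; rewrite negb_or in hn2.
  case/andP: hn1 => -> _; case/andP: hn2 => -> _; rewrite hst hlen /= andbT.
  case/orP: hxy => // /andP [/eqP ? /eqP ?]; subst.
  by have := cdist_pos hst; lia.
- exists ((p, q), (u, w)); first by rewrite inE /= hpq huw h1 hlong.
  by rewrite inE /= /nonedge /add_edge !eqxx orbT /= !andbF.
Qed.

Definition cycle_rel n : rel 'I_n := fun x y => cdist x y == 1.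

Lemma cycle_valid n : 3 <= n -> valid (@cycle_rel n).
Proof.
move=> hn; split.
- by move=> x; rewrite /cycle_rel; move: (ltn_ord x); circle_arith.
- by move=> x y hxy; rewrite /cycle_rel; move: hxy hn (ltn_ord x) (ltn_ord y); circle_arith.
- by move=> x v y hc; rewrite /cycle_rel => h; move: hc h (ltn_ord x) (ltn_ord v) (ltn_ord y);
    circle_arith.
Qed.

Lemma cycle_P3_gt n (E : rel 'I_n) u w : 4 <= n -> nonedge E u w -> cdist u w = 1 ->
  (forall x y, E x y -> cdist x y = 1) -> P3 E < P3 (@cycle_rel n).
Proof.
move=> hn huw h1 hunit.
apply: (@proper_card _ (paths3 E) (paths3 (@cycle_rel n))); apply/properP; split.
- apply/subsetP => -[[x y] z] /paths3_elim [[hxy hyz hxz exy eyz] _].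
  have e1 := hunit _ _ exy; have e2 := hunit _ _ eyz.
  apply: paths3_intro; rewrite // /cycle_rel ?e1 ?e2 //;
    move: e1 e2 hxz hn (ltn_ord x) (ltn_ord y) (ltn_ord z); circle_arith.
- have [v hv] : exists v : 'I_n, cdist w v = 1.
    have hn0 : 0 < n by lia.
    case: (ltnP w.+1 n) => hw; [exists (Ordinal hw) | exists (Ordinal hn0)];
      rewrite cdistE /=; move: (ltn_ord w); case: ifP; lia.
  exists (u, w, v).
  + by apply: paths3_intro; rewrite /cycle_rel;
      move: h1 hv hn (ltn_ord u) (ltn_ord w) (ltn_ord v); circle_arith.
  + by apply/negP => /paths3_elim [[_ _ _ h _] _]; move: huw; rewrite /nonedge h andbF.
Qed.

Theorem mainTheorem6 (n : nat) (hn : 4 <= n) (E : rel 'I_n) :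
  optimal E ->
  forall a : nat, alpha E = Some a -> n < 4 * a.
Proof.
move=> hopt a ha; have [hv hP3max hximin] := hopt.
have [[u [w [huw <-]]] hshortest] := alphaP ha.
rewrite ltnNge; apply/negP => hquarter.
have hpos : 0 < cdist u w by apply: cdist_pos; case/and3P: huw.
have hhalf : 2 * cdist u w < n by lia.
have hshort := optimal_edges_short hopt huw hhalf.
have [hle hlt] := add_P3 hv huw hshortest hquarter hshort.
have hv' := add_valid hv huw hshortest; have hmax := hP3max _ hv'.
have hunit : cdist u w = 1 by case: (ltnP 1 (cdist u w)) => [/hlt|]; lia.
have hP3eq : P3 (add_edge E u w) = P3 E by lia.
have hedges x y : E x y -> cdist x y = 1.
  move=> hxy; case: (ltnP 1 (cdist x y)) => [hlong|].
  - by have := hximin _ hv' hP3eq; have := add_unit_xi huw hunit hxy hlong; lia.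
  - by have := cdist_pos (edge_neq hv hxy); lia.
have := hP3max _ (cycle_valid (ltnW hn)); have := cycle_P3_gt hn huw hunit hedges; lia.
Qed.
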